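(* Let $(X,d)$ be a compact metric space and $F$ a semiflow on $X$. Let $x,y\in X$ with $y\in\mathcal R_{\mathcal S}$. If $x\succcurlyeq_{\mathcal S} y$, then $x\succcurlyeq_{\mathcal C} y$. In particular $\mathcal R_{\mathcal S}\subset\mathcal R_{\mathcal C}$.
   Context: A semiflow on a metric space $(X,d)$ is a continuous map $F:[0,\infty)\times X\to X$, $(t,x)\mapsto F^t(x)$, with $F^0=\mathrm{id}$ and $F^{t+s}=F^t\circ F^s$ for all $t,s\ge0$. A curve is piecewise continuous if it is continuous except at finitely many points, at which one-sided limits exist. Conley chains: for $\varepsilon>0$, $T>0$, an $(\varepsilon,T)$-chain from $x$ to $y$ is a finite sequence $x=x_0,\dots,x_N=y$ in $X$ with times $t_i\ge T$ such that $d(F^{t_i}(x_i),x_{i+1})<\varepsilon$ for $i=0,\dots,N-1$. Write $x\succcurlyeq_{\mathcal C} y$ if for every $\varepsilon>0$ and $T>0$ there is an $(\varepsilon,T)$-chain from $x$ to $y$. Shadow chains: for $T\ge1$, a piecewise continuous $\gamma:[0,T]\to X$ is $\varepsilon$-close to $F$ if $d(\gamma(t+\tau),F^\tau(\gamma(t)))<\varepsilon$ for every $\tau\in[0,1]$ and $t\in[0,T-\tau]$. An $\varepsilon$-chain from $x$ to $y$ is such a $\gamma$ with $\gamma(0)=x$, $\gamma(T)=y$. Write $x\succcurlyeq_{\mathcal S} y$ if for every $\varepsilon>0$ there is an $\varepsilon$-chain from $x$ to $y$. For $\star\in\{\mathcal C,\mathcal S\}$: $x$ is $\star$-chain-recurrent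 if $x$ is a fixed point of $F$ or there is $y$ with $x\succcurlyeq_\star y$ and $y\succcurlyeq_\star x$; $\mathcal R_\star$ denotes the set of $\star$-chain-recurrent points. *)

From Stdlib Require Import Reals List.
Open Scope R_scope.

Section Defs.
Context {X : Type}.
Variable d : X -> X -> R.

Definition is_metric : Prop :=
  (forall x y, 0 <= d x y) /\
  (forall x y, d x y = 0 <-> x = y) /\
  (forall x y, d x y = d y x) /\
  (forall x y z, d x z <= d x y + d y z).

Definition mopen (U : X -> Prop) : Prop :=
  forall x, U x -> exists r, 0 < r /\ forall y, d x y < r -> U y.

Definition compact_space : Prop :=
  forall (I : Type) (U : I -> X -> Prop),
    (forall i, mopen (U i)) ->
    (forall x, exists i, U i x) ->
    exists l : list I, forall x, exists i, In i l /\ U i x.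

(* F : [0,oo) x X -> X is a semiflow (values of F at negative times are irrelevant) *)
Definition semiflow (F : R -> X -> X) : Prop :=
  (forall t x, 0 <= t -> forall eps, 0 < eps -> exists delta, 0 < delta /\
      forall s y, 0 <= s -> Rabs (s - t) < delta -> d x y < delta ->
        d (F s y) (F t x) < eps) /\
  (forall x, F 0 x = x) /\
  (forall t s x, 0 <= t -> 0 <= s -> F (t + s) x = F t (F s x)).

Definition conley_chain (F : R -> X -> X) (eps T : R) (x y : X) : Prop :=
  exists (N : nat) (xs : nat -> X) (ts : nat -> R),
    (1 <= N)%nat /\ xs 0%nat = x /\ xs N = y /\
    forall i, (i < N)%nat -> T <= ts i /\ d (F (ts i) (xs i)) (xs (S i)) < eps.

Definition conley_le (F : R -> X -> X) (x y : X) : Prop :=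
  forall eps T, 0 < eps -> 0 < T -> conley_chain F eps T x y.

(* gamma : [0,T] -> X (values outside [0,T] irrelevant) *)
Definition cont_within_at (T : R) (gamma : R -> X) (t : R) : Prop :=
  forall eps, 0 < eps -> exists delta, 0 < delta /\
    forall s, 0 <= s <= T -> Rabs (s - t) < delta -> d (gamma s) (gamma t) < eps.

Definition left_limit_exists (T : R) (gamma : R -> X) (p : R) : Prop :=
  exists L, forall eps, 0 < eps -> exists delta, 0 < delta /\
    forall s, 0 <= s <= T -> p - delta < s < p -> d (gamma s) L < eps.

Definition right_limit_exists (T : R) (gamma : R -> X) (p : R) : Prop :=
  exists L, forall eps, 0 < eps -> exists delta, 0 < delta /\
    forall s, 0 <= s <= T -> p < s < p + delta -> d (gamma s) L < eps.

Definition piecewise_continuous (T : R) (gamma : R -> X) : Prop :=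
  exists l : list R,
    (forall t, 0 <= t <= T -> ~ In t l -> cont_within_at T gamma t) /\
    (forall p, In p l -> 0 <= p <= T ->
       (0 < p -> left_limit_exists T gamma p) /\
       (p < T -> right_limit_exists T gamma p)).

Definition eps_close (F : R -> X -> X) (eps T : R) (gamma : R -> X) : Prop :=
  forall tau t, 0 <= tau <= 1 -> 0 <= t <= T - tau ->
    d (gamma (t + tau)) (F tau (gamma t)) < eps.

Definition shadow_chain (F : R -> X -> X) (eps : R) (x y : X) : Prop :=
  exists (T : R) (gamma : R -> X),
    1 <= T /\ piecewise_continuous T gamma /\ eps_close F eps T gamma /\
    gamma 0 = x /\ gamma T = y.

Definition shadow_le (F : R -> X -> X) (x y : X) : Prop :=
  forall eps, 0 < eps -> shadow_chain F eps x y.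

Definition fixed_point (F : R -> X -> X) (x : X) : Prop :=
  forall t, 0 <= t -> F t x = x.

Definition chain_recurrent (le : X -> X -> Prop) (F : R -> X -> X) (x : X) : Prop :=
  fixed_point F x \/ exists y, le x y /\ le y x.

Definition R_C (F : R -> X -> X) (x : X) : Prop := chain_recurrent (conley_le F) F x.
Definition R_S (F : R -> X -> X) (x : X) : Prop := chain_recurrent (shadow_le F) F x.
End Defs.

(* Sampling a shadow chain on a grid of mesh in [1/2, 1] gives a delta-pseudo-orbit
   whose step times lie in [1/2, 1]. By compactness the maps F s, 0 <= s <= b, are
   uniformly equicontinuous, so a pseudo-orbit with at most 2K steps and small delta
   ends eps-close to the true orbit of its starting point. Cutting a pseudo-orbit of
   at least K steps into blocks of K to 2K - 1 steps thus gives an (eps, T)-Conley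
   chain as soon as K >= 2T. Since y is shadow-recurrent, there are arbitrarily long
   pseudo-orbit loops at y, which make a pseudo-orbit from x to y long enough. *)
From Stdlib Require Import Reals Lra Lia Classical List ZArith.
Open Scope R_scope.

Lemma exists_pos_lower_bound {I : Type} (l : list I) (f : I -> R) :
  (forall i, 0 < f i) -> exists m, 0 < m /\ forall i, In i l -> m <= f i.
Proof.
  intros Hf; induction l as [|i l [m [Hm Hml]]].
  - exists 1; split; [lra | intros i []].
  - exists (Rmin (f i) m); split; [apply Rmin_glb_lt; auto|].
    intros j [<- | Hj]; [apply Rmin_l|].
    apply (Rle_trans _ m); [apply Rmin_r | auto].
Qed.

Lemma exists_nat_between (r : R) : 0 < r -> exists n : nat, r < INR n /\ INR n <= r + 1.
Proof.
  intros Hr; destruct (archimed r) as [Hup1 Hup2].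
  assert (Hpos : (0 < up r)%Z) by (apply lt_0_IZR; lra).
  exists (Z.to_nat (up r)); rewrite INR_IZR_INZ, Z2Nat.id by lia; lra.
Qed.

Section SemiflowChains.
Context {X : Type} (d : X -> X -> R) (F : R -> X -> X).
Context (Hd : is_metric d) (Hc : compact_space d) (HF : semiflow d F).

Lemma dist_refl x : d x x = 0.
Proof. destruct Hd as (_ & Hz & _); apply Hz; reflexivity. Qed.

Lemma dist_sym x y : d x y = d y x.
Proof. destruct Hd as (_ & _ & Hs & _); apply Hs. Qed.

Lemma dist_triangle x y z : d x z <= d x y + d y z.
Proof. destruct Hd as (_ & _ & _ & Ht); apply Ht. Qed.

Lemma semiflow_zero x : F 0 x = x.
Proof. destruct HF as (_ & H0 & _); apply H0. Qed.

Lemma semiflow_add t s x : 0 <= t -> 0 <= s -> F (t + s) x = F t (F s x).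
Proof. destruct HF as (_ & _ & Hadd); apply Hadd. Qed.

(* The set of good time horizons u is an interval containing 0; continuity at
   (sup, x) lets it pass its supremum unless the supremum is b. *)
Lemma semiflow_unif_in_time b x eps : 0 <= b -> 0 < eps ->
  exists eta, 0 < eta /\
    forall s y, 0 <= s <= b -> d x y < eta -> d (F s y) (F s x) < eps.
Proof.
  intros Hb He.
  set (good := fun u => 0 <= u <= b /\ exists eta, 0 < eta /\
    forall s y, 0 <= s <= u -> d x y < eta -> d (F s y) (F s x) < eps).
  assert (good0 : good 0).
  { split; [lra|]; exists eps; split; [exact He|].
    intros s y Hs Hy; replace s with 0 by lra.
    rewrite !semiflow_zero, dist_sym; exact Hy. }
  destruct (completeness good) as [c [Hub Hlub]].
  { exists b; intros u [Hu _]; lra. }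
  { exists 0; exact good0. }
  assert (Hc0 : 0 <= c) by (apply Hub, good0).
  assert (Hcb : c <= b) by (apply Hlub; intros u [Hu _]; lra).
  destruct HF as (Hcont & _).
  destruct (Hcont c x Hc0 (eps / 2)) as [dc [Hdc Hnear]]; [lra|].
  assert (Hclose : exists u, good u /\ c - dc < u).
  { apply NNPP; intros Hn; enough (c <= c - dc) by lra.
    apply Hlub; intros u Hu; apply Rnot_lt_le; intros Hlt; apply Hn; eauto. }
  destruct Hclose as [u [[_ [eu [Heu Hpu]]] Hcu]].
  set (v := Rmin b (c + dc / 2)).
  assert (good_v : good v).
  { split; [unfold v, Rmin; destruct Rle_dec; lra|].
    exists (Rmin eu dc); split; [apply Rmin_glb_lt; auto|].
    intros s y Hs Hy.
    assert (Hyu : d x y < eu) by (eapply Rlt_le_trans; [exact Hy | apply Rmin_l]).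
    assert (Hyc : d x y < dc) by (eapply Rlt_le_trans; [exact Hy | apply Rmin_r]).
    destruct (Rle_dec s u) as [Hsu | Hsu]; [apply Hpu; auto; lra|].
    assert (Hv : v <= c + dc / 2) by apply Rmin_r.
    assert (Hsc : Rabs (s - c) < dc) by (apply Rabs_def1; lra).
    assert (Hxx : d x x < dc) by (rewrite dist_refl; exact Hdc).
    pose proof (Hnear s y ltac:(lra) Hsc Hyc).
    pose proof (Hnear s x ltac:(lra) Hsc Hxx).
    pose proof (dist_triangle (F s y) (F c x) (F s x)).
    rewrite (dist_sym (F c x)) in *; lra. }
  assert (Hvb : v = b).
  { assert (Hvc : v <= c) by (apply Hub, good_v).
    revert Hvc; unfold v, Rmin; destruct Rle_dec; lra. }
  rewrite Hvb in good_v; destruct good_v as [_ [eta [Heta Hgood]]].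
  exists eta; split; auto.
Qed.

Lemma semiflow_equicontinuous b eps : 0 <= b -> 0 < eps ->
  exists delta, 0 < delta /\
    forall s a c, 0 <= s <= b -> d a c < delta -> d (F s a) (F s c) < eps.
Proof.
  intros Hb He.
  set (I := {p : X * R | 0 < snd p /\ forall s y, 0 <= s <= b ->
         d (fst p) y < snd p -> d (F s y) (F s (fst p)) < eps / 2}).
  set (ball := fun (i : I) z => d (fst (proj1_sig i)) z < snd (proj1_sig i) / 2).
  destruct (Hc I ball) as [l Hl].
  - intros i z Hz; exists (snd (proj1_sig i) / 2 - d (fst (proj1_sig i)) z).
    unfold ball in *; split; [lra|].
    intros w Hw; pose proof (dist_triangle (fst (proj1_sig i)) z w); lra.
  - intros z; destruct (semiflow_unif_in_time b z (eps / 2)) as [eta [Heta Hz]]; [lra | lra |].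
    exists (exist _ (z, eta) (conj Heta Hz)); unfold ball; simpl.
    rewrite dist_refl; lra.
  - destruct (exists_pos_lower_bound l (fun i : I => snd (proj1_sig i) / 2))
      as [m [Hm Hml]].
    { intros i; destruct (proj2_sig i); lra. }
    exists m; split; [exact Hm|]; intros s a c Hs Hac.
    destruct (Hl a) as [i [Hi Hai]]; unfold ball in Hai.
    pose proof (Hml i Hi) as Hmi; simpl in Hmi.
    destruct (proj2_sig i) as [_ Hctr].
    assert (Hci : d (fst (proj1_sig i)) c < snd (proj1_sig i))
      by (pose proof (dist_triangle (fst (proj1_sig i)) a c); lra).
    pose proof (Hctr s a Hs ltac:(lra)).
    pose proof (Hctr s c Hs Hci).
    pose proof (dist_triangle (F s a) (F s (fst (proj1_sig i))) (F s c)).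
    rewrite (dist_sym (F s (fst (proj1_sig i))) (F s c)) in *; lra.
Qed.

Inductive pseudo_orbit (delta : R) : nat -> R -> X -> X -> Prop :=
| pseudo_orbit_nil a : pseudo_orbit delta 0 0 a a
| pseudo_orbit_cons a b c s n t : 1/2 <= s <= 1 -> d b (F s a) < delta ->
    pseudo_orbit delta n t b c -> pseudo_orbit delta (S n) (s + t) a c.

Lemma pseudo_orbit_time delta n t a c :
  pseudo_orbit delta n t a c -> INR n / 2 <= t <= INR n.
Proof. induction 1; [simpl; lra | rewrite S_INR; lra]. Qed.

Lemma pseudo_orbit_mono delta delta' n t a c : delta <= delta' ->
  pseudo_orbit delta n t a c -> pseudo_orbit delta' n t a c.
Proof. intros Hle; induction 1; econstructor; eauto; lra. Qed.

Lemma pseudo_orbit_app delta m n t t' a b c :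
  pseudo_orbit delta m t a b -> pseudo_orbit delta n t' b c ->
  pseudo_orbit delta (m + n) (t + t') a c.
Proof.
  induction 1; intros H'; simpl; [rewrite Rplus_0_l; exact H'|].
  rewrite Rplus_assoc; econstructor; eauto.
Qed.

Lemma pseudo_orbit_split delta m n t a c : pseudo_orbit delta (m + n) t a c ->
  exists b t1 t2, t = t1 + t2 /\
    pseudo_orbit delta m t1 a b /\ pseudo_orbit delta n t2 b c.
Proof.
  revert t a; induction m as [|m IH]; intros t a H.
  - exists a, 0, t; repeat split; [ring | constructor | exact H].
  - inversion H as [| a0 b c0 s n0 t0 Hs Hb Htail]; subst.
    destruct (IH _ _ Htail) as [b' [t1 [t2 [-> [Hhead Hrest]]]]].
    exists b', (s + t1), t2; repeat split; [ring | econstructor; eauto | exact Hrest].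
Qed.

Lemma pseudo_orbit_iterate delta l L y : (1 <= l)%nat -> pseudo_orbit delta l L y y ->
  forall K, exists m t, (K <= m)%nat /\ pseudo_orbit delta m t y y.
Proof.
  intros Hl Hloop K; induction K as [|K [m [t [Hm Hmt]]]].
  - exists 0%nat, 0; split; [lia | constructor].
  - exists (l + m)%nat, (L + t); split; [lia | eapply pseudo_orbit_app; eauto].
Qed.

Lemma shadow_chain_pseudo_orbit delta x y : shadow_chain d F delta x y ->
  exists n t, (1 <= n)%nat /\ pseudo_orbit delta n t x y.
Proof.
  intros [T [g [HT [_ [Hclose [Hg0 HgT]]]]]].
  destruct (exists_nat_between T) as [n [Hn1 Hn2]]; [lra|].
  assert (Hn : 0 < INR n) by lra.
  set (h := T / INR n).
  assert (Hnh : INR n * h = T) by (unfold h; field; lra).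
  assert (Hh : 1/2 <= h <= 1)
    by (split; apply (Rmult_le_reg_l (INR n)); auto; rewrite Hnh; lra).
  assert (Hgrid : forall k, (k <= n)%nat ->
            pseudo_orbit delta k (INR k * h) (g (T - INR k * h)) y).
  { induction k as [|k IH]; intros Hk.
    - simpl; rewrite Rmult_0_l, Rminus_0_r, HgT; constructor.
    - assert (Hkn : INR (S k) <= INR n) by (apply le_INR; exact Hk).
      rewrite S_INR in Hkn; pose proof (pos_INR k).
      replace (INR (S k) * h) with (h + INR k * h) by (rewrite S_INR; ring).
      econstructor; [exact Hh | | apply IH; lia].
      replace (T - INR k * h) with ((T - (h + INR k * h)) + h) by ring.
      apply Hclose; [lra | split; nra]. }
  exists n, T; split.
  - apply INR_lt; simpl; lra.
  - specialize (Hgrid n (le_n n)); rewrite Hnh, Rminus_diag, Hg0 in Hgrid; exact Hgrid.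
Qed.

Lemma recurrent_pseudo_orbit_loop delta y : R_S d F y -> 0 < delta ->
  exists l L, (1 <= l)%nat /\ pseudo_orbit delta l L y y.
Proof.
  intros [Hfix | [z [Hyz Hzy]]] Hdelta.
  - exists 1%nat, (1 + 0); split; [lia|].
    econstructor; [lra | | constructor].
    rewrite Hfix, dist_refl by lra; exact Hdelta.
  - destruct (shadow_chain_pseudo_orbit delta y z (Hyz delta Hdelta)) as [m1 [t1 [Hm1 H1]]].
    destruct (shadow_chain_pseudo_orbit delta z y (Hzy delta Hdelta)) as [m2 [t2 [_ H2]]].
    exists (m1 + m2)%nat, (t1 + t2); split; [lia | eapply pseudo_orbit_app; eauto].
Qed.

Lemma pseudo_orbit_endpoint_close M eps : 0 < eps ->
  exists delta, 0 < delta /\ forall n t a c, (n <= M)%nat ->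
    pseudo_orbit delta n t a c -> d (F t a) c < eps.
Proof.
  revert eps; induction M as [|M IH]; intros eps He.
  - exists 1; split; [lra|]; intros n t a c Hn H.
    replace n with 0%nat in H by lia; inversion H; subst.
    rewrite semiflow_zero, dist_refl; exact He.
  - destruct (IH (eps / 2)) as [d1 [Hd1 Hclose]]; [lra|].
    destruct (semiflow_equicontinuous (INR M) (eps / 2)) as [d2 [Hd2 Hequi]];
      [apply pos_INR | lra |].
    exists (Rmin d1 d2); split; [apply Rmin_glb_lt; auto|].
    intros n t a c Hn H; inversion H as [a0 | a0 b c0 s m t0 Hs Hb Htail]; subst.
    { rewrite semiflow_zero, dist_refl; exact He. }
    pose proof (pseudo_orbit_time _ _ _ _ _ Htail) as Ht0.
    assert (HmM : INR m <= INR M) by (apply le_INR; lia).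
    rewrite Rplus_comm, semiflow_add by lra.
    pose proof (Hclose m t0 b c ltac:(lia)
                  (pseudo_orbit_mono _ _ _ _ _ _ (Rmin_l d1 d2) Htail)).
    assert (d (F t0 (F s a)) (F t0 b) < eps / 2).
    { apply Hequi; [lra|]; rewrite dist_sym.
      eapply Rlt_le_trans; [exact Hb | apply Rmin_r]. }
    pose proof (dist_triangle (F t0 (F s a)) (F t0 b) c); lra.
Qed.

Lemma conley_chain_one eps T t a b :
  T <= t -> d (F t a) b < eps -> conley_chain d F eps T a b.
Proof.
  intros Ht Hab.
  exists 1%nat, (fun i => match i with 0%nat => a | _ => b end), (fun _ => t).
  split; [lia|]; split; [reflexivity|]; split; [reflexivity|].
  intros i Hi; replace i with 0%nat by lia; auto.
Qed.

Lemma conley_chain_cons eps T t a b c : T <= t -> d (F t a) b < eps ->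
  conley_chain d F eps T b c -> conley_chain d F eps T a c.
Proof.
  intros Ht Hab [N [xs [ts [HN [H0 [HNe Hs]]]]]].
  exists (S N), (fun i => match i with 0%nat => a | S j => xs j end),
    (fun i => match i with 0%nat => t | S j => ts j end).
  split; [lia|]; split; [reflexivity|]; split; [exact HNe|].
  intros [|i] Hi; [rewrite H0; auto | apply Hs; lia].
Qed.

Lemma pseudo_orbit_conley_chain eps T delta K : (1 <= K)%nat -> 2 * T <= INR K ->
  (forall n t a c, (n <= K + K)%nat -> pseudo_orbit delta n t a c -> d (F t a) c < eps) ->
  forall n t a c, (K <= n)%nat -> pseudo_orbit delta n t a c -> conley_chain d F eps T a c.
Proof.
  intros HK HKT Hclose n; induction n as [n IH] using (well_founded_induction Wf_nat.lt_wf).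
  intros t a c Hn H.
  destruct (Compare_dec.le_lt_dec (K + K) n) as [Hlong | Hshort].
  - replace n with (K + (n - K))%nat in H by lia.
    destruct (pseudo_orbit_split _ _ _ _ _ _ H) as [b [t1 [t2 [_ [H1 H2]]]]].
    pose proof (pseudo_orbit_time _ _ _ _ _ H1).
    apply (conley_chain_cons eps T t1 a b); [lra | apply (Hclose K); auto; lia|].
    apply (IH (n - K)%nat ltac:(lia) t2); auto; lia.
  - pose proof (pseudo_orbit_time _ _ _ _ _ H).
    apply le_INR in Hn.
    apply (conley_chain_one eps T t); [lra | apply (Hclose n); auto; lia].
Qed.

Lemma shadow_le_conley_le x y : R_S d F y -> shadow_le d F x y -> conley_le d F x y.
Proof.
  intros Hy Hxy eps T He HT.
  destruct (exists_nat_between (2 * T)) as [K [HK _]]; [lra|].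
  assert (HK1 : (1 <= K)%nat) by (destruct K; [simpl in HK; lra | lia]).
  destruct (pseudo_orbit_endpoint_close (K + K) eps He) as [delta [Hdelta Hclose]].
  destruct (recurrent_pseudo_orbit_loop delta y Hy Hdelta) as [l [L [Hl Hloop]]].
  destruct (pseudo_orbit_iterate delta l L y Hl Hloop K) as [m [t [Hm Hym]]].
  destruct (shadow_chain_pseudo_orbit delta x y (Hxy delta Hdelta)) as [n [t0 [_ Hxy']]].
  apply (pseudo_orbit_conley_chain eps T delta K HK1 ltac:(lra) Hclose (n + m) (t0 + t));
    [lia | eapply pseudo_orbit_app; eauto].
Qed.

End SemiflowChains.

Theorem proposition3p5 (X : Type) (d : X -> X -> R)
  (Hd : is_metric d) (Hc : compact_space d)
  (F : R -> X -> X) (HF : semiflow d F) :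
  (forall x y : X, R_S d F y -> shadow_le d F x y -> conley_le d F x y) /\
  (forall x : X, R_S d F x -> R_C d F x).
Proof.
  pose proof (shadow_le_conley_le d F Hd Hc HF) as Hle.
  split; [exact Hle|].
  intros x [Hfix | [y [Hxy Hyx]]]; [left; exact Hfix | right; exists y].
  split; apply Hle; auto; right; eauto.
Qed.
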